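(* Let $n\le 3$ and $R=\mathbb{C}[z_1,\dots,z_n]$. Let $f_1,\dots,f_P,g\in R$ be homogeneous polynomials of degree $m$ with $\{f_1,\dots,f_P,g\}$ linearly independent over $\mathbb{C}$, and let $I^+=\langle f_1,\dots,f_P\rangle$. If $\langle g\rangle_{m+1}\subseteq I^+_{m+1}$, then $P\ge n$.
   Context: For a homogeneous ideal $I\subseteq R$, $I_{d}$ denotes its homogeneous component of degree $d$. *)

(* multinomials (mpoly) over the complex numbers R[i],
   where R : realType (any realType is isomorphic to the real numbers). *)
From HB Require Import structures.
From mathcomp Require Import all_boot all_order all_algebra.
From mathcomp Require Import mpoly.
From mathcomp Require Import complex.
From mathcomp Require Import reals.

Set Implicit Arguments.
Unset Strict Implicit.
Unset Printing Implicit Defensive.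

Import GRing.Theory.
Local Open Scope ring_scope.

Definition in_ideal (A : comNzRingType) (P : nat) (f : 'I_P -> A) (p : A) : Prop :=
  exists h : 'I_P -> A, p = \sum_(i < P) h i * f i.

Definition in_ideal_deg (C : comNzRingType) (n P d : nat)
    (f : 'I_P -> {mpoly C[n]}) (p : {mpoly C[n]}) : Prop :=
  p \is d.-homog /\ in_ideal f p.

Definition lin_indep_with (C : comNzRingType) (n P : nat)
    (f : 'I_P -> {mpoly C[n]}) (g : {mpoly C[n]}) : Prop :=
  forall (c : 'I_P -> C) (d : C),
    \sum_(i < P) c i *: f i + d *: g = 0 -> (forall i, c i = 0) /\ d = 0.

(* Taking degree-(m+1) parts in [z_i g \in I^+] gives matrices [A_j] with
   [l_c g = \sum_j l_(c A_j) f_j] for every linear form [l_c = \sum_i c_i z_i].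
   For [P = 0] this forces [g = 0]; for [P = 1] an eigenvector of [A_1] (the
   field is algebraically closed) turns it into [g = lambda f_1].  For
   [P = 2 < n = 3], replacing [g] by [g - lambda f_1] we may assume
   [c0 A_1 = 0], so [l_c0 g = l_d f_2] with [d = c0 A_2].  Linear forms are
   prime, hence [f_2 = l_c0 h] and [g = l_d h].  Then the kernel of [A_1] is
   the line of [c0]; in dimension 3 two rows of [A_1] are independent, and
   cross-multiplying their relations forces [f_1 = h l_e] and
   [l_d^2 \in (l_c0, l_e)].  So [d] is in the span of [c0] and [e], i.e. [g]
   is in the span of [f_1] and [f_2]. *)

From HB Require Import structures.
From mathcomp Require Import all_boot all_order all_algebra.
From mathcomp Require Import mpoly.
From mathcomp Require Import complex.
From mathcomp Require Import reals.
From mathcomp Require Import ring zify.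

Set Implicit Arguments.
Unset Strict Implicit.
Unset Printing Implicit Defensive.

Import GRing.Theory.
Local Open Scope ring_scope.

Section LinearForms.
Variables (K : fieldType) (n : nat).
Local Notation Pol := {mpoly K[n]}.
Implicit Types (c d : 'rV[K]_n) (p q : Pol).

Definition linform c : Pol := \sum_(i < n) c 0 i *: 'X_i.

Fact linform_is_linear : linear linform.
Proof.
move=> a c d; rewrite /linform scaler_sumr -big_split /=.
by apply: eq_bigr => i _; rewrite !mxE scalerDl scalerA.
Qed.

HB.instance Definition _ :=
  GRing.isLinear.Build K 'rV[K]_n Pol _ linform linform_is_linear.

Lemma mcoeff_linform c k : (linform c)@_U_(k) = c 0 k.
Proof.
rewrite /linform raddf_sum (bigD1 k) //= big1 ?addr0.
  by rewrite mcoeffZ mcoeffXU eqxx mulr1.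
by move=> i /negbTE ik; rewrite mcoeffZ mcoeffXU ik mulr0.
Qed.

Lemma linform_eq0 c : (linform c == 0) = (c == 0).
Proof.
apply/eqP/eqP => [c0|->]; last exact: linear0.
by apply/rowP => k; rewrite mxE -mcoeff_linform c0 mcoeff0.
Qed.

Lemma dhomogXU i : ('X_i : Pol) \is 1.-homog.
Proof. by rewrite dhomogX /= mdeg1. Qed.

Lemma dhomog_linform c : linform c \is 1.-homog.
Proof. by apply: rpred_sum => i _; rewrite rpredZ ?dhomogXU. Qed.

Lemma dhomog1_linform p : p \is 1.-homog -> linform (\row_k p@_U_(k)) = p.
Proof.
move=> p_homog; apply/mpolyP => mo.
have [/mdeg1P [i /eqP ->]|mo_deg] := boolP (mdeg mo == 1%N).
  by rewrite mcoeff_linform mxE.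
rewrite (dhomog_nemf_coeff p_homog) // /linform raddf_sum /= big1 // => i _.
rewrite mcoeffZ mcoeffX; case: eqP => [moE|]; last by rewrite mulr0.
by move: mo_deg; rewrite -moE mdeg1.
Qed.

Lemma linform_mulmx c (A : 'M[K]_n) :
  linform (c *m A) = \sum_i c 0 i *: linform (row i A).
Proof. by rewrite mulmx_sum_row linear_sum; apply: eq_bigr => i _; rewrite linearZ. Qed.

Definition dvd_linform c p : Prop := exists h, p = linform c * h.

(* Substitutes for [X_k] its value on the hyperplane [linform c = 0]. *)
Definition pivot_subst c (k : 'I_n) : n.-tuple Pol :=
  [tuple if i == k then 'X_i - (c 0 k)^-1 *: linform c else 'X_i | i < n].

Lemma comp_pivot_substXU c k i :
  'X_i \mPo pivot_subst c k = if i == k then 'X_i - (c 0 k)^-1 *: linform c else 'X_i.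
Proof. by rewrite comp_mpolyXU -tnth_nth tnth_mktuple. Qed.

Lemma comp_pivot_subst_linform c k d :
  linform d \mPo pivot_subst c k = linform (d - (d 0 k / c 0 k) *: c).
Proof.
rewrite linearB linearZ /= {1}/linform raddf_sum /=.
under eq_bigr do rewrite comp_mpolyZ comp_pivot_substXU.
rewrite (eq_bigr (fun i => d 0 i *: 'X_i -
    (if i == k then d 0 i *: ((c 0 k)^-1 *: linform c) else 0))).
  by rewrite sumrB -big_mkcond big_pred1_eq scalerA.
by move=> i _; case: eqP => _; rewrite ?subr0 // scalerBr.
Qed.

Lemma pivot_subst_congr c k p :
  c 0 k != 0 -> dvd_linform c (p - (p \mPo pivot_subst c k)).
Proof.
move=> ck; pose D q := dvd_linform c (q - (q \mPo pivot_subst c k)).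
have DD q r : D q -> D r -> D (q + r).
  move=> [a qE] [b rE]; exists (a + b).
  by rewrite comp_mpolyD opprD addrACA qE rE mulrDr.
have DM q r : D q -> D r -> D (q * r).
  move=> [a qE] [b rE]; exists (a * r + (q \mPo pivot_subst c k) * b).
  by rewrite rmorphM mulrDr mulrA -qE mulrCA -rE; ring.
have DC a : D a%:MP by exists 0; rewrite comp_mpolyC subrr mulr0.
have DX i : D 'X_i.
  exists (if i == k then ((c 0 k)^-1)%:MP else 0).
  rewrite comp_pivot_substXU; case: eqP => _; last by rewrite subrr mulr0.
  by rewrite opprB addrC subrK -mul_mpolyC mulrC.
have D1 : D 1 by rewrite -mpolyC1.
have DXn i e : D ('X_i ^+ e).
  by elim: e => [|e IHe]; rewrite ?expr0 // exprS; apply: DM.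
have D0 : D 0 by rewrite -mpolyC0.
rewrite [p]mpolyE; apply: (big_ind D D0 DD) => mo _.
rewrite -mul_mpolyC mpolyXE_id; apply: (DM) => //.
by apply: (big_ind D D1 DM) => i _.
Qed.

(* Composition with [pivot_subst c k] is a retraction of [K[X]] onto
   [K[X_i, i != k]] with kernel [(linform c)]; the image being a domain,
   linear forms are prime. *)
Lemma linform_annihilator c : c != 0 -> exists s : {rmorphism Pol -> Pol},
  [/\ s (linform c) = 0,
      forall d, exists kappa, s (linform d) = linform (d - kappa *: c)
    & forall p, s p = 0 -> dvd_linform c p].
Proof.
move=> c_neq0; have /existsP [k ck] : [exists k, c 0 k != 0].
  apply: contraNT c_neq0 => /existsPn c0.
  by apply/eqP/rowP => k; rewrite mxE; apply/eqP/negbNE/c0.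
exists (comp_mpoly (pivot_subst c k) : {rmorphism Pol -> Pol}); split => /=.
- by rewrite comp_pivot_subst_linform divff // scale1r subrr linear0.
- by move=> d; exists (d 0 k / c 0 k); rewrite comp_pivot_subst_linform.
- by move=> p sp; have := pivot_subst_congr p ck; rewrite sp subr0.
Qed.

Lemma dvd_linform_linform c d : c != 0 -> dvd_linform c (linform d) -> (d <= c)%MS.
Proof.
move=> c_neq0 [h dE]; have [s [sc sd _]] := linform_annihilator c_neq0.
have [kappa skd] := sd d.
have /eqP : linform (d - kappa *: c) = 0 by rewrite -skd dE rmorphM sc mul0r.
by rewrite linform_eq0 subr_eq0 => /eqP ->; apply/sub_rVP; exists kappa.
Qed.

Lemma dvd_linform_mul c p q : c != 0 ->
  dvd_linform c (p * q) -> dvd_linform c p \/ dvd_linform c q.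
Proof.
move=> c_neq0 [h pqE]; have [s [sc _ ker]] := linform_annihilator c_neq0.
have /eqP : s p * s q = 0 by rewrite -rmorphM pqE rmorphM sc mul0r.
by rewrite mulf_eq0 => /orP [] /eqP /ker; [left|right].
Qed.

Lemma linform_mul_eq c d p q : c != 0 -> ~~ (d <= c)%MS ->
  linform c * p = linform d * q -> exists h, q = linform c * h /\ p = linform d * h.
Proof.
move=> c_neq0 d_notin pqE.
have [/(dvd_linform_linform c_neq0) d_in|[h qE]] :=
  dvd_linform_mul c_neq0 (ex_intro _ p (esym pqE)).
  by rewrite d_in in d_notin.
exists h; split=> //; apply: (mulfI (_ : linform c != 0)); first by rewrite linform_eq0.
by rewrite pqE qE mulrCA.
Qed.

Lemma linform_sqr_eq a b d p q : a != 0 ->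
  linform d ^+ 2 = linform a * p + linform b * q ->
  exists mu nu, d = mu *: b + nu *: a.
Proof.
move=> a_neq0 dE; have [s [sa sl _]] := linform_annihilator a_neq0.
have [kd skd] := sl d; have [kb skb] := sl b.
have sdE : linform (d - kd *: a) ^+ 2 = linform (b - kb *: a) * s q.
  by rewrite -skd -skb -rmorphXn -rmorphM dE rmorphD !rmorphM sa mul0r add0r.
have [b'0|b'_neq0] := eqVneq (b - kb *: a) 0.
  move/eqP: sdE; rewrite b'0 linear0 mul0r expf_eq0 /= linform_eq0 subr_eq0.
  by move=> /eqP ->; exists 0, kd; rewrite scale0r add0r.
have d'_in : (d - kd *: a <= b - kb *: a)%MS.
  have : dvd_linform (b - kb *: a) (linform (d - kd *: a) * linform (d - kd *: a)).
    by exists (s q); rewrite -expr2.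
  by case/(dvd_linform_mul b'_neq0) => /(dvd_linform_linform b'_neq0).
have [mu /eqP] := sub_rVP d'_in; rewrite subr_eq => /eqP ->.
by exists mu, (kd - mu * kb); rewrite scalerBr scalerBl scalerA addrA addrAC.
Qed.

End LinearForms.

Lemma exists_noncolinear_rows (K : fieldType) (n : nat)
    (A : 'M[K]_n) (c0 : 'rV[K]_n) :
  (2 < n)%N -> (forall c : 'rV[K]_n, c *m A = 0 -> (c <= c0)%MS) ->
  exists i j, row i A != 0 /\ ~~ (row j A <= row i A)%MS.
Proof.
move=> n_gt2 kerA.
have rankA : (1 < \rank A)%N.
  have : (\rank (kermx A) <= 1)%N.
    apply: leq_trans (rank_leq_row c0); apply/mxrankS/row_subP => i.
    by apply: kerA; apply/sub_kermxP/row_sub.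
  by rewrite mxrank_ker; lia.
have /existsP [i Ai] : [exists i, row i A != 0].
  apply: contraLR rankA => /existsPn rowA0.
  suff -> : A = 0 by rewrite mxrank0.
  by apply/row_matrixP => i; rewrite row0; apply/eqP/negbNE/rowA0.
have /existsP [j Aj] : [exists j, ~~ (row j A <= row i A)%MS].
  apply: contraLR rankA => /existsPn rowAi; rewrite -leqNgt.
  apply: leq_trans (rank_leq_row (row i A)); apply/mxrankS/row_subP => j.
  exact/negbNE/rowAi.
by exists i, j.
Qed.

Section HomogeneousFactors.
Variables (K : idomainType) (n : nat).
Local Notation Pol := {mpoly K[n]}.

Lemma pihomogMl k t (a b : Pol) : a \is k.-homog ->
  pihomog mdeg (k + t) (a * b) = a * pihomog mdeg t b.
Proof.
move=> a_homog.
have -> : a * b = \sum_(mo <- msupp b) a * (b@_mo *: 'X_[mo]).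
  by rewrite {1}[b]mpolyE mulr_sumr.
have -> : pihomog mdeg t b = \sum_(mo <- msupp b) pihomog mdeg t (b@_mo *: 'X_[mo]).
  by rewrite {1}[b]mpolyE linear_sum.
rewrite linear_sum mulr_sumr; apply: eq_bigr => mo _.
rewrite -scalerAr !linearZ -scalerAr /=; congr (_ *: _).
have aX_homog : a * 'X_[mo] \is (k + mdeg mo).-homog by rewrite dhomogM ?dhomogX.
rewrite pihomogX; case: eqP => [<-|ne]; first by rewrite pihomog_dE.
by rewrite mulr0 (pihomog_ne0 _ aX_homog) // (inj_eq (@addnI k)); apply/eqP.
Qed.

Lemma msize_dhomog d (p : Pol) : p != 0 -> p \is d.-homog -> msize p = d.+1.
Proof.
move=> p_neq0 p_homog; rewrite (dhomog_uniq p_neq0 p_homog (dhomog_msize p_homog)).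
by rewrite prednK // lt0n msize_poly_eq0.
Qed.

Lemma dhomog_cofactor k d (a b : Pol) : a != 0 -> a \is k.-homog ->
  a * b != 0 -> a * b \is d.-homog -> (k <= d)%N /\ b \is (d - k).-homog.
Proof.
move=> a_neq0 a_homog ab_neq0 ab_homog.
have b_neq0 : b != 0 by apply: contraNneq ab_neq0 => ->; rewrite mulr0.
have k_le_d : (k <= d)%N.
  have := msizeM a_neq0 b_neq0.
  rewrite (msize_dhomog ab_neq0 ab_homog) (msize_dhomog a_neq0 a_homog).
  have : (0 < msize b)%N by rewrite lt0n msize_poly_eq0.
  lia.
split=> //; have : a * pihomog mdeg (d - k) b = a * b.
  by rewrite -(pihomogMl _ _ a_homog) subnKC // pihomog_dE.
by move/(mulfI a_neq0) <-; apply: pihomogP.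
Qed.

End HomogeneousFactors.

Lemma linform_mul_coef_mx (K : fieldType) (n P m : nat)
    (f : 'I_P -> {mpoly K[n]}) (g : {mpoly K[n]}) :
  (forall j, f j \is m.-homog) -> g \is m.-homog ->
  (forall i : 'I_n, in_ideal f ('X_i * g)) ->
  exists A : 'I_P -> 'M[K]_n,
    forall c, linform c * g = \sum_j linform (c *m A j) * f j.
Proof.
move=> f_homog g_homog /fin_all_exists [h XgE].
pose A j := \matrix_(i, k) (pihomog mdeg 1 (h i j))@_U_(k).
have XgA i : 'X_i * g = \sum_j linform (row i (A j)) * f j.
  have Xg_homog : 'X_i * g \is (1 + m)%N.-homog by rewrite dhomogM ?dhomogXU.
  rewrite -(pihomog_dE Xg_homog) XgE linear_sum /=; apply: eq_bigr => j _.
  rewrite mulrC addnC pihomogMl // mulrC -(dhomog1_linform (pihomogP _ _ _)).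
  by congr (linform _ * _); apply/rowP => k; rewrite !mxE.
exists A => c; rewrite {1}/linform mulr_suml.
under eq_bigr do rewrite -scalerAl XgA scaler_sumr.
rewrite exchange_big /=; apply: eq_bigr => j _.
by rewrite linform_mulmx mulr_suml; apply: eq_bigr => i _; rewrite scalerAl.
Qed.

Section LinearIndependence.
Variables (C : comNzRingType) (n P : nat).
Variables (f : 'I_P -> {mpoly C[n]}) (g : {mpoly C[n]}).
Hypothesis indep : lin_indep_with f g.

Lemma lin_indep_with_neq0 j : f j != 0.
Proof.
apply/eqP => fj0.
have sum0 : \sum_i (i == j)%:R *: f i + 0 *: g = 0.
  rewrite scale0r addr0 (bigD1 j) //= fj0 scaler0 add0r big1 // => i /negbTE ->.
  by rewrite scale0r.
by have [/(_ j) /eqP] := indep sum0; rewrite eqxx oner_eq0.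
Qed.

Lemma lin_indep_with_notin_span (a : 'I_P -> C) : g != \sum_j a j *: f j.
Proof.
apply/eqP => gE.
have sum0 : \sum_j - a j *: f j + 1 *: g = 0.
  by rewrite scale1r gE -big_split big1 //= => j _; rewrite scaleNr addNr.
by have [_ /eqP] := indep sum0; rewrite oner_eq0.
Qed.

End LinearIndependence.

Section TwoGenerators.
Variables (K : fieldType) (n m : nat) (f1 f2 g : {mpoly K[n]}).
Variables (A B : 'M[K]_n) (c0 : 'rV[K]_n).
Hypothesis n_gt2 : (2 < n)%N.
Hypotheses (f1_homog : f1 \is m.-homog) (f2_homog : f2 \is m.-homog).
Hypotheses (f1_neq0 : f1 != 0) (f2_neq0 : f2 != 0).
Hypothesis g_notin_span : forall a b, g != a *: f1 + b *: f2.
Hypothesis relAB :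
  forall c, linform c * g = linform (c *m A) * f1 + linform (c *m B) * f2.
Hypotheses (c0_neq0 : c0 != 0) (c0A : c0 *m A = 0).

Local Notation d := (c0 *m B).

Let linform_c0_neq0 : linform c0 != 0. Proof. by rewrite linform_eq0. Qed.

Lemma c0B_notin_c0 : ~~ (d <= c0)%MS.
Proof.
apply/sub_rVP => -[mu dE]; move/eqP: (g_notin_span 0 mu); apply.
rewrite scale0r add0r; apply: (mulfI linform_c0_neq0).
by rewrite relAB c0A linear0 mul0r add0r dE linearZ -scalerAl scalerAr.
Qed.

Lemma f2_g_common_factor : exists h, f2 = linform c0 * h /\ g = linform d * h.
Proof.
apply: linform_mul_eq c0_neq0 c0B_notin_c0 _.
by rewrite relAB c0A linear0 mul0r add0r.
Qed.

Section CommonFactor.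
Variable h : {mpoly K[n]}.
Hypotheses (f2E : f2 = linform c0 * h) (gE : g = linform d * h).

Local Notation q c := (linform c * linform d - linform (c *m B) * linform c0).

Let h_neq0 : h != 0.
Proof. by apply: contraNneq f2_neq0 => h0; rewrite f2E h0 mulr0. Qed.

Lemma linform_mulA_f1 c : linform (c *m A) * f1 = h * q c.
Proof.
apply: (addIr (linform (c *m B) * (linform c0 * h))).
by rewrite -f2E -relAB gE f2E; ring.
Qed.

Lemma kerA_sub_c0 (c : 'rV[K]_n) : c *m A = 0 -> (c <= c0)%MS.
Proof.
move=> cA0; have /eqP := linform_mulA_f1 c.
rewrite cA0 linear0 mul0r eq_sym mulf_eq0 (negbTE h_neq0) subr_eq0 => /eqP qc0.
have : dvd_linform c0 (linform c * linform d).
  by exists (linform (c *m B)); rewrite qc0 mulrC.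
case/(dvd_linform_mul c0_neq0) => /(dvd_linform_linform c0_neq0) // d_in.
by move: c0B_notin_c0; rewrite d_in.
Qed.

Lemma f1_factor : exists e, f1 = h * linform e.
Proof.
have [i [j [Ai_neq0 Aj_notin]]] := exists_noncolinear_rows n_gt2 kerA_sub_c0.
have cross : linform (row i A) * q 'e_j = linform (row j A) * q 'e_i.
  apply: (mulfI h_neq0); rewrite !rowE mulrCA -linform_mulA_f1.
  by rewrite [RHS]mulrCA -linform_mulA_f1 mulrCA.
have [w [qiE _]] := linform_mul_eq Ai_neq0 Aj_notin cross.
have f1E : f1 = h * w.
  apply: (mulfI (_ : linform (row i A) != 0)); first by rewrite linform_eq0.
  by rewrite rowE linform_mulA_f1 qiE -rowE mulrCA.
have [m_gt0 h_homog] : (1 <= m)%N /\ h \is (m - 1).-homog.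
  by apply: (dhomog_cofactor linform_c0_neq0 (dhomog_linform c0)); rewrite -f2E.
have [_ w_homog] : (m - 1 <= m)%N /\ w \is (m - (m - 1)).-homog.
  by apply: (dhomog_cofactor h_neq0 h_homog); rewrite -f1E.
rewrite subKn // in w_homog.
by exists (\row_k w@_U_(k)); rewrite dhomog1_linform.
Qed.

Lemma common_factor_absurd : False.
Proof.
have [e f1E] := f1_factor.
have qE c : q c = linform (c *m A) * linform e.
  by apply: (mulfI h_neq0); rewrite -linform_mulA_f1 f1E mulrCA.
have dsqrE :
    linform d ^+ 2 = linform c0 * linform (d *m B) + linform e * linform (d *m A).
  by rewrite expr2 -[_ * _](subrK (linform (d *m B) * linform c0)) qE; ring.
have [mu [nu dE]] := linform_sqr_eq c0_neq0 dsqrE.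
move/eqP: (g_notin_span mu nu); apply.
by rewrite gE dE linearD !linearZ /= mulrDl -!scalerAl f1E f2E mulrC [h * _]mulrC.
Qed.

End CommonFactor.

Lemma c0_kernel_absurd : False.
Proof.
by have [h [f2E gE]] := f2_g_common_factor; apply: (common_factor_absurd f2E gE).
Qed.

End TwoGenerators.

Lemma two_generators_absurd (K : fieldType) (n m : nat) (f1 f2 g : {mpoly K[n]})
    (A B : 'M[K]_n) (c0 : 'rV[K]_n) (lam : K) :
  (2 < n)%N -> f1 \is m.-homog -> f2 \is m.-homog -> f1 != 0 -> f2 != 0 ->
  (forall a b, g != a *: f1 + b *: f2) ->
  (forall c, linform c * g = linform (c *m A) * f1 + linform (c *m B) * f2) ->
  c0 != 0 -> c0 *m A = lam *: c0 -> False.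
Proof.
move=> n_gt2 f1_homog f2_homog f1_neq0 f2_neq0 g_notin relAB c0_neq0 c0A.
apply: (@c0_kernel_absurd K n m f1 f2 (g - lam *: f1) (A - lam%:M) B c0) => //.
- by move=> a b; rewrite subr_eq addrAC -scalerDl.
- move=> c; rewrite mulrBr relAB mulmxBr mul_mx_scalar linearB linearZ /=.
  by rewrite mulrBl -scalerAl -scalerAr addrAC.
- by rewrite mulmxBr c0A mul_mx_scalar subrr.
Qed.

Theorem proposition2 (R : realType) (n P m : nat) (hn : (n <= 3)%N)
    (f : 'I_P -> {mpoly R[i][n]}) (g : {mpoly R[i][n]})
    (hf : forall j, f j \is m.-homog) (hg : g \is m.-homog)
    (hind : lin_indep_with f g)
    (hsub : forall p : {mpoly R[i][n]},
        in_ideal_deg (m.+1) (fun _ : 'I_1 => g) p -> in_ideal_deg (m.+1) f p) :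
  (n <= P)%N.
Proof.
rewrite leqNgt; apply/negP => P_lt_n.
have n_gt0 : (0 < n)%N by apply: leq_ltn_trans P_lt_n.
have XgI i : in_ideal f ('X_i * g).
  case: (hsub ('X_i * g)) => //; split; first by rewrite -add1n dhomogM ?dhomogXU.
  by exists (fun=> 'X_i); rewrite big_ord1.
have [A relA] := linform_mul_coef_mx hf hg XgI.
have notin := lin_indep_with_notin_span hind.
move: f A hf hind relA notin {hsub XgI}.
case: P P_lt_n => [|[|[|P]]] P_lt_n f A hf hind relA notin.
- have e_neq0 : linform 'e_(Ordinal n_gt0) != 0 :> {mpoly R[i][n]}.
    rewrite linform_eq0; apply/eqP => /rowP /(_ (Ordinal n_gt0)) /eqP.
    by rewrite !mxE eqxx oner_eq0.
  have /negP := notin (fun=> 0); apply; rewrite big_ord0; apply/eqP.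
  by apply: (mulfI e_neq0); rewrite relA big_ord0 mulr0.
- have [lam /eigenvalueP [c0 c0A c0_neq0]] := eigenvalue_closed (A ord0) n_gt0.
  have /negP := notin (fun=> lam); apply; rewrite big_ord1; apply/eqP.
  apply: (mulfI (_ : linform c0 != 0)); first by rewrite linform_eq0.
  by rewrite relA big_ord1 c0A linearZ -scalerAl scalerAr.
- have [lam /eigenvalueP [c0 c0A c0_neq0]] := eigenvalue_closed (A ord0) n_gt0.
  apply: (two_generators_absurd (f1 := f ord0) (f2 := f (lift ord0 ord0)) (g := g)
    (B := A (lift ord0 ord0)) P_lt_n (hf _) (hf _) (lin_indep_with_neq0 hind _)
    (lin_indep_with_neq0 hind _) _ _ c0_neq0 c0A).
  + move=> a b; have := notin (fun j => if j == ord0 then a else b).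
    by rewrite big_ord_recl big_ord1.
  + by move=> c; rewrite relA big_ord_recl big_ord1.
- by have := leq_trans P_lt_n hn.
Qed.
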